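(* Let $0<q<1$ and let $\alpha,\beta>-1$ be real. For every integer $n\ge 1$ and every $x\in\mathbb C$, \begin{align*} &(1-2xq^{\alpha+1/2}+q^{2\alpha+1})(1+2xq^{\beta+1/2}+q^{2\beta+1})\,P_{n-1}^{(\alpha+1,\beta+1)}(x;q)\\ &=\frac{(1+q^{\alpha+\beta+n})(1+q^{\alpha+\beta+n+1})(1+q^{\alpha+n})(1+q^{\beta+n})(1-q^{\alpha+n})(1-q^{\beta+n})}{(1-q^{2n+\alpha+\beta})(1-q^{2n+\alpha+\beta+1})}\,P_{n-1}^{(\alpha,\beta)}(x;q)\\ &\quad+\frac{(1+q^{\alpha+\beta+n+1})(1+q^{\alpha+\beta+2n+1})(1+q^{n})^2(1-q^{n})(1-q^{\alpha-\beta})}{(1-q^{2n+\alpha+\beta})(1-q^{2n+\alpha+\beta+2})}\,q^{\beta}\,P_{n}^{(\alpha,\beta)}(x;q)\\ &\quad-\frac{(1+q^{n})^2(1+q^{n+1})^2(1-q^{n})(1-q^{n+1})}{(1-q^{2n+\alpha+\beta+1})(1-q^{2n+\alpha+\beta+2})}\,q^{\alpha+\beta}\,P_{n+1}^{(\alpha,\beta)}(x;q). \end{align*}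
   Context: Notation: for $a\in\mathbb C$, $(a;q)_0=1$, $(a;q)_n=\prod_{j=0}^{n-1}(1-aq^j)$, $(a;q)_\infty=\prod_{j\ge0}(1-aq^j)$, and $(a_1,\dots,a_m;q)_n=\prod_{k=1}^m(a_k;q)_n$. The basic hypergeometric series is ${}_r\phi_s(a_1,\dots,a_r;b_1,\dots,b_s;q,z)=\sum_{k\ge0}\frac{(a_1,\dots,a_r;q)_k}{(q,b_1,\dots,b_s;q)_k}\big[(-1)^kq^{k(k-1)/2}\big]^{1+s-r}z^k$. For $x=\cos\theta$, the continuous $q$-Jacobi polynomials in Rahman's normalization are $$P_n^{(\alpha,\beta)}(x;q)=\frac{(q^{\alpha+1},-q^{\beta+1};q)_n}{(q,-q;q)_n}\,{}_4\phi_3\!\left(q^{-n},q^{n+\alpha+\beta+1},q^{1/2}e^{i\theta},q^{1/2}e^{-i\theta};\,q^{\alpha+1},-q^{\beta+1},-q;\,q,q\right),$$ a polynomial of degree $n$ in $x$ (the terminating series depends on $\theta$ only through $x$, so it extends to all $x\in\mathbb C$). *)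

From Stdlib Require Import Reals.
From Coquelicot Require Import Coquelicot.
Open Scope R_scope.

Definition qpow (q a : R) : R := Rpower q a.

Fixpoint qpoch (a q : R) (n : nat) : R :=
  match n with
  | O => 1
  | S m => qpoch a q m * (1 - a * q ^ m)
  end.

(* (q^{1/2} e^{i theta}, q^{1/2} e^{-i theta}; q)_k written through x = cos theta:
   prod_{j<k} (1 - q^{j+1/2} e^{i theta})(1 - q^{j+1/2} e^{-i theta})
   = prod_{j<k} (1 - 2 x q^{j+1/2} + q^{2j+1}); this is the polynomial
   extension to all complex x. *)
Fixpoint qpoch_cos (x : C) (q : R) (k : nat) : C :=
  match k with
  | O => RtoC 1
  | S m => Cmult (qpoch_cos x q m)
             (Cplus (Cminus (RtoC 1)
                        (Cmult (RtoC (2 * qpow q (INR m + / 2))) x))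
                    (RtoC (q ^ (2 * m + 1))))
  end.

Fixpoint csum (f : nat -> C) (n : nat) : C :=
  match n with
  | O => f O
  | S m => Cplus (csum f m) (f (S m))
  end.

(* k-th term of the terminating 4phi3 series
   4phi3(q^{-n}, q^{n+al+be+1}, q^{1/2}e^{i th}, q^{1/2}e^{-i th};
         q^{al+1}, -q^{be+1}, -q; q, q) *)
Definition phi43_term (q al be : R) (n : nat) (x : C) (k : nat) : C :=
  Cmult (RtoC (qpoch (qpow q (- INR n)) q k
               * qpoch (qpow q (INR n + al + be + 1)) q k
               / (qpoch q q k * qpoch (qpow q (al + 1)) q k
                  * qpoch (- qpow q (be + 1)) q k * qpoch (- q) q k)
               * q ^ k))
        (qpoch_cos x q k).

(* Continuous q-Jacobi polynomial, Rahman's normalization, at x = cos theta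
   (extended polynomially to all complex x). *)
Definition qJacobiP (q al be : R) (n : nat) (x : C) : C :=
  Cmult (RtoC (qpoch (qpow q (al + 1)) q n * qpoch (- qpow q (be + 1)) q n
               / (qpoch q q n * qpoch (- q) q n)))
        (csum (phi43_term q al be n x) n).

From Stdlib Require Import Reals Lra Lia.
From Coquelicot Require Import Coquelicot.
Open Scope R_scope.

(* Write phi_k(x) = prod_(j<k) (1 - 2 x q^(j+1/2) + q^(2j+1)) and P_m = sum_k c_k phi_k.  Since
     1 - 2 c q^(1/2) x + c^2 q = (1 - c q^-k)(1 - c q^(k+1)) + c q^-k (1 - 2 x q^(k+1/2) + q^(2k+1)),
   multiplying such an expansion by a quadratic factor only mixes phi_k and phi_(k+1).  For c = q^al
   and c = -q^be, comparing coefficients gives the contiguous relations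
     (1 - 2 x q^(al+1/2) + q^(2al+1)) P_m^(al+1,be) = a P_m^(al,be) - b P_(m+1)^(al,be),
     (1 + 2 x q^(be+1/2) + q^(2be+1)) P_m^(al,be+1) = a' P_m^(al,be) + b' P_(m+1)^(al,be),
   whose coefficient identities become rational identities once every q-shifted factorial is expressed
   through those of one neighbouring coefficient.  Applying the be-relation at (al+1, be) and then the
   al-relation to both resulting terms yields the three-term formula, whose coefficients are products
   of contiguous coefficients. *)

Lemma qpow_plus q a b : qpow q (a + b) = qpow q a * qpow q b.
Proof. apply Rpower_plus. Qed.

Lemma qpow_opp q a : qpow q (- a) = / qpow q a.
Proof. apply Rpower_Ropp. Qed.

Lemma qpow_INR q n : 0 < q -> qpow q (INR n) = q ^ n.
Proof. apply Rpower_pow. Qed.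

Lemma qpow_1 q : 0 < q -> qpow q 1 = q.
Proof. apply Rpower_1. Qed.

Lemma qpow_pos q a : 0 < qpow q a.
Proof. apply exp_pos. Qed.

Lemma qpow_lt_1 q a : 0 < q -> q < 1 -> 0 < a -> qpow q a < 1.
Proof.
  intros hq0 hq1 ha. unfold qpow, Rpower. rewrite <- exp_0. apply exp_increasing.
  assert (ln q < 0) by (rewrite <- ln_1; apply ln_increasing; lra). nra.
Qed.

Lemma qpow_double q a : qpow q (2 * a) = qpow q a * qpow q a.
Proof. replace (2 * a) with (a + a) by ring. apply qpow_plus. Qed.

Lemma qpow_2 q : 0 < q -> qpow q 2 = q * q.
Proof. intros hq. replace 2 with (2 * 1) by ring. rewrite qpow_double, qpow_1 by exact hq. ring. Qed.

Lemma qpow_mul_q_lt_1 q a : 0 < q -> q < 1 -> -1 < a -> qpow q a * q < 1.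
Proof.
  intros hq0 hq1 ha. rewrite <- (qpow_1 q hq0) at 2. rewrite <- qpow_plus.
  apply qpow_lt_1; lra.
Qed.

Lemma pow_pos_le_1 q k : 0 < q -> q < 1 -> 0 < q ^ k <= 1.
Proof.
  intros hq0 hq1. split; [now apply pow_lt|].
  rewrite <- (pow1 k). apply pow_incr. lra.
Qed.

Lemma Rmult_in_01 a b : 0 < a < 1 -> 0 < b <= 1 -> 0 < a * b < 1.
Proof. intros; split; nra. Qed.

Lemma qpoch_S a q k : qpoch a q (S k) = qpoch a q k * (1 - a * q ^ k).
Proof. reflexivity. Qed.

Lemma qpoch_S_l a q k : qpoch a q (S k) = (1 - a) * qpoch (a * q) q k.
Proof.
  induction k as [|k IH]; [cbn; ring|].
  rewrite qpoch_S, IH, qpoch_S. cbn [pow]. ring.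
Qed.

Lemma qpoch_mul_q a q k : a <> 1 -> qpoch (a * q) q k = qpoch a q k * (1 - a * q ^ k) / (1 - a).
Proof.
  intros ha. assert (1 - a <> 0) by lra.
  apply (Rmult_eq_reg_r (1 - a)); [|assumption].
  rewrite (Rmult_comm (qpoch (a * q) q k)), <- qpoch_S_l, qpoch_S. field. assumption.
Qed.

Lemma qpoch_pos a q k : 0 < q -> q < 1 -> a < 1 -> 0 < qpoch a q k.
Proof.
  intros hq0 hq1 ha. induction k as [|k IH]; cbn; [lra|].
  pose proof (pow_pos_le_1 q k hq0 hq1).
  apply Rmult_lt_0_compat; [assumption|]. destruct (Rle_dec a 0); nra.
Qed.

Lemma qpoch_inv_pow_vanish q m k : q <> 0 -> (m < k)%nat -> qpoch (/ q ^ m) q k = 0.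
Proof.
  intros hq hmk. replace k with (S m + (k - S m))%nat by lia.
  induction (k - S m)%nat as [|d IH].
  - rewrite Nat.add_0_r, qpoch_S, Rinv_l by (apply pow_nonzero; assumption). ring.
  - rewrite Nat.add_succ_r, qpoch_S, IH. ring.
Qed.

Definition qfactor (q c : R) (x : C) : C :=
  Cplus (Cminus (RtoC 1) (Cmult (RtoC (2 * c * qpow q (/ 2))) x)) (RtoC (c * c * q)).

Lemma qpoch_cos_S x q k : 0 < q ->
  qpoch_cos x q (S k) = Cmult (qpoch_cos x q k) (qfactor q (q ^ k) x).
Proof.
  intros hq. cbn [qpoch_cos]. unfold qfactor. rewrite qpow_plus, qpow_INR by exact hq.
  do 3 f_equal.
  - do 2 f_equal. ring.
  - replace (2 * k + 1)%nat with (k + k + 1)%nat by lia. rewrite !pow_add. ring.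
Qed.

Lemma qfactor_mul_qpoch_cos q c x k : 0 < q ->
  Cmult (qfactor q c x) (qpoch_cos x q k)
  = Cplus (Cmult (RtoC ((1 - c / q ^ k) * (1 - c * q ^ S k))) (qpoch_cos x q k))
          (Cmult (RtoC (c / q ^ k)) (qpoch_cos x q (S k))).
Proof.
  intros hq. rewrite qpoch_cos_S by exact hq. unfold qfactor.
  assert (q ^ k <> 0) by (apply pow_nonzero; lra).
  destruct (qpoch_cos x q k) as [p1 p2], x as [x1 x2].
  apply injective_projections; simpl; field; assumption.
Qed.

Definition qcos_sum (a : nat -> R) (q : R) (x : C) (N : nat) : C :=
  csum (fun k => Cmult (RtoC (a k)) (qpoch_cos x q k)) N.

Lemma qcos_sum_S a q x N :
  qcos_sum a q x (S N) = Cplus (qcos_sum a q x N) (Cmult (RtoC (a (S N))) (qpoch_cos x q (S N))).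
Proof. reflexivity. Qed.

Lemma qcos_sum_ext a b q x N : (forall k, a k = b k) -> qcos_sum a q x N = qcos_sum b q x N.
Proof.
  intros hab. induction N as [|N IH]; [cbn; now rewrite hab|].
  now rewrite !qcos_sum_S, IH, hab.
Qed.

Lemma qcos_sum_scal r a q x N :
  Cmult (RtoC r) (qcos_sum a q x N) = qcos_sum (fun k => r * a k) q x N.
Proof.
  induction N as [|N IH]; [cbn; rewrite RtoC_mult; ring|].
  rewrite !qcos_sum_S, <- IH, RtoC_mult. ring.
Qed.

Lemma qcos_sum_plus a b q x N :
  Cplus (qcos_sum a q x N) (qcos_sum b q x N) = qcos_sum (fun k => a k + b k) q x N.
Proof.
  induction N as [|N IH]; [cbn; rewrite RtoC_plus; ring|].
  rewrite !qcos_sum_S, <- IH, RtoC_plus. ring.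
Qed.

Lemma qcos_sum_S_zero a q x N : a (S N) = 0 -> qcos_sum a q x (S N) = qcos_sum a q x N.
Proof. intros ha. rewrite qcos_sum_S, ha. ring. Qed.

Definition qfactor_shift (q c : R) (a : nat -> R) (k : nat) : R :=
  (1 - c / q ^ k) * (1 - c * q ^ S k) * a k
  + match k with O => 0 | S j => c / q ^ j * a j end.

Lemma qfactor_mul_qcos_sum q c a x N : 0 < q ->
  Cmult (qfactor q c x) (qcos_sum a q x N)
  = Cplus (qcos_sum (qfactor_shift q c a) q x N)
          (Cmult (RtoC (c / q ^ N * a N)) (qpoch_cos x q (S N))).
Proof.
  intros hq.
  assert (hterm : forall r k, Cmult (qfactor q c x) (Cmult (RtoC r) (qpoch_cos x q k))
                              = Cmult (RtoC r) (Cmult (qfactor q c x) (qpoch_cos x q k)))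
    by (intros; ring).
  induction N as [|N IH].
  - cbn [qcos_sum csum]. rewrite hterm, qfactor_mul_qpoch_cos by exact hq.
    unfold qfactor_shift. rewrite !RtoC_plus, !RtoC_mult. ring.
  - rewrite !qcos_sum_S, Cmult_plus_distr_l, IH, hterm, qfactor_mul_qpoch_cos by exact hq.
    unfold qfactor_shift. rewrite !RtoC_plus, !RtoC_mult. ring.
Qed.

Lemma qfactor_mul_qcos_sum_contiguous q c a b0 b1 r0 r1 x m : 0 < q ->
  a (S m) = 0 -> b0 (S m) = 0 ->
  (forall k, qfactor_shift q c a k = r0 * b0 k + r1 * b1 k) ->
  Cmult (qfactor q c x) (qcos_sum a q x m)
  = Cplus (Cmult (RtoC r0) (qcos_sum b0 q x m)) (Cmult (RtoC r1) (qcos_sum b1 q x (S m))).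
Proof.
  intros hq ha hb0 hshift.
  assert (hlast : c / q ^ m * a m = qfactor_shift q c a (S m))
    by (unfold qfactor_shift; rewrite ha; ring).
  rewrite qfactor_mul_qcos_sum, hlast by exact hq.
  rewrite <- (qcos_sum_S_zero b0 q x m hb0), !qcos_sum_scal, qcos_sum_plus.
  rewrite <- qcos_sum_S. now apply qcos_sum_ext.
Qed.

Definition jacobi_coef (q A B : R) (m k : nat) : R :=
  qpoch (A * q) q m * qpoch (- (B * q)) q m / (qpoch q q m * qpoch (- q) q m)
  * (qpoch (/ q ^ m) q k * qpoch (q ^ m * A * B * q) q k
     / (qpoch q q k * qpoch (A * q) q k * qpoch (- (B * q)) q k * qpoch (- q) q k)
     * q ^ k).

Lemma qJacobiP_qcos_sum q al be m x : 0 < q ->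
  qJacobiP q al be m x = qcos_sum (jacobi_coef q (qpow q al) (qpow q be) m) q x m.
Proof.
  intros hq. unfold qJacobiP. etransitivity; [apply qcos_sum_scal|].
  apply qcos_sum_ext. intros k. unfold jacobi_coef.
  rewrite qpow_opp, !qpow_plus, qpow_INR, qpow_1 by exact hq. reflexivity.
Qed.

Lemma jacobi_coef_vanish q A B m k : q <> 0 -> (m < k)%nat -> jacobi_coef q A B m k = 0.
Proof.
  intros hq hmk. unfold jacobi_coef. rewrite qpoch_inv_pow_vanish by assumption.
  unfold Rdiv. ring.
Qed.

Ltac prove_nonzero :=
  repeat split;
  match goal with
  | |- qpoch _ _ _ <> 0 => apply Rgt_not_eq, qpoch_pos; [assumption | assumption | nra]
  | |- _ <> 0 => apply Rgt_not_eq; nra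
  end.

Section JacobiCoefRatios.

Variables q A B : R.
Hypotheses (hq0 : 0 < q) (hq1 : q < 1) (hAq : A * q < 1) (hB : 0 < B) (hBq : B * q < 1).

(* The relations lowering [k] are stated relative to the coefficient with shifted [A] (resp. [B]):
   relative to [jacobi_coef q A B m k] they would divide by [1 - q ^ m * A * B * q], which vanishes
   when m = 0 and A * B * q = 1 (i.e. al + be = -1). *)

Lemma jacobi_coef_succ_index m k :
  jacobi_coef q A B m (S k)
  = jacobi_coef q A B m k
    * ((1 - q ^ k / q ^ m) * (1 - q ^ m * A * B * q * q ^ k) * q
       / ((1 - q * q ^ k) * (1 - A * q * q ^ k) * (1 + B * q * q ^ k) * (1 + q * q ^ k))).
Proof.
  destruct (pow_pos_le_1 q k hq0 hq1), (pow_pos_le_1 q m hq0 hq1).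
  unfold jacobi_coef. rewrite !qpoch_S. cbn [pow].
  field. prove_nonzero.
Qed.

Lemma jacobi_coef_succ_index_alpha m k :
  jacobi_coef q A B m (S k)
  = jacobi_coef q (A * q) B m k
    * ((1 - q ^ k / q ^ m) * (1 - q ^ m * A * B * q) * q
       / ((1 - A * q * q ^ m) * (1 - q * q ^ k) * (1 + B * q * q ^ k) * (1 + q * q ^ k))).
Proof.
  destruct (pow_pos_le_1 q k hq0 hq1), (pow_pos_le_1 q m hq0 hq1).
  unfold jacobi_coef.
  rewrite (qpoch_S_l (A * q)), (qpoch_S_l (q ^ m * A * B * q)), (qpoch_mul_q (A * q) q m) by nra.
  rewrite !qpoch_S. replace (q ^ m * (A * q) * B * q) with (q ^ m * A * B * q * q) by ring.
  cbn [pow]. field. prove_nonzero.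
Qed.

Lemma jacobi_coef_succ_index_beta m k :
  jacobi_coef q A B m (S k)
  = jacobi_coef q A (B * q) m k
    * ((1 - q ^ k / q ^ m) * (1 - q ^ m * A * B * q) * q
       / ((1 + B * q * q ^ m) * (1 - q * q ^ k) * (1 - A * q * q ^ k) * (1 + q * q ^ k))).
Proof.
  destruct (pow_pos_le_1 q k hq0 hq1), (pow_pos_le_1 q m hq0 hq1).
  unfold jacobi_coef. replace (- (B * q * q)) with (- (B * q) * q) by ring.
  rewrite (qpoch_S_l (- (B * q))), (qpoch_S_l (q ^ m * A * B * q)), (qpoch_mul_q (- (B * q)) q m) by nra.
  rewrite !qpoch_S. replace (q ^ m * A * (B * q) * q) with (q ^ m * A * B * q * q) by ring.
  cbn [pow]. field. prove_nonzero.
Qed.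

Lemma jacobi_coef_succ_degree_alpha m k :
  jacobi_coef q A B (S m) (S k)
  = jacobi_coef q (A * q) B m k
    * ((1 + B * q * q ^ m) * (1 - / (q * q ^ m)) * (1 - q ^ m * A * B * q * q * q ^ k) * q
       / ((1 - q * q ^ m) * (1 + q * q ^ m) * (1 - q * q ^ k) * (1 + B * q * q ^ k) * (1 + q * q ^ k))).
Proof.
  destruct (pow_pos_le_1 q k hq0 hq1), (pow_pos_le_1 q m hq0 hq1).
  unfold jacobi_coef.
  rewrite (qpoch_S_l (A * q) q m), (qpoch_S_l (A * q) q k), (qpoch_S_l (/ q ^ S m)).
  rewrite !qpoch_S. cbn [pow].
  replace (/ (q * q ^ m) * q) with (/ q ^ m) by (field; lra).
  replace (q ^ m * (A * q) * B * q) with (q * q ^ m * A * B * q) by ring.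
  field. prove_nonzero.
Qed.

Lemma jacobi_coef_succ_degree_beta m k :
  jacobi_coef q A B (S m) (S k)
  = jacobi_coef q A (B * q) m k
    * ((1 - A * q * q ^ m) * (1 - / (q * q ^ m)) * (1 - q ^ m * A * B * q * q * q ^ k) * q
       / ((1 - q * q ^ m) * (1 + q * q ^ m) * (1 - q * q ^ k) * (1 - A * q * q ^ k) * (1 + q * q ^ k))).
Proof.
  destruct (pow_pos_le_1 q k hq0 hq1), (pow_pos_le_1 q m hq0 hq1).
  unfold jacobi_coef. replace (- (B * q * q)) with (- (B * q) * q) by ring.
  rewrite (qpoch_S_l (- (B * q)) q m), (qpoch_S_l (- (B * q)) q k), (qpoch_S_l (/ q ^ S m)).
  rewrite !qpoch_S. cbn [pow].
  replace (/ (q * q ^ m) * q) with (/ q ^ m) by (field; lra).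
  replace (q ^ m * A * (B * q) * q) with (q * q ^ m * A * B * q) by ring.
  field. prove_nonzero.
Qed.

End JacobiCoefRatios.

(* With M = q^(m+1): the coefficients of the contiguous relation in al, and (A and B swapped) in be. *)
Definition contig_coef_same (A B M : R) : R := (1 - A * A * M * M) * (1 + A * B * M) / (1 - A * B * M * M).
Definition contig_coef_succ (A B M : R) : R := A * (1 - M) * (1 + M) ^ 2 / (1 - A * B * M * M).

Section JacobiContiguity.

Variables q A B : R.
Hypotheses (hq0 : 0 < q) (hq1 : q < 1) (hA : 0 < A) (hAq : A * q < 1) (hB : 0 < B) (hBq : B * q < 1).

Lemma jacobi_coef_contiguous_alpha m k :
  qfactor_shift q A (jacobi_coef q (A * q) B m) k
  = contig_coef_same A B (q ^ S m) * jacobi_coef q A B m k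
    - contig_coef_succ A B (q ^ S m) * jacobi_coef q A B (S m) k.
Proof.
  destruct (pow_pos_le_1 q m hq0 hq1).
  assert (0 < A * B * (q * q ^ m) * (q * q ^ m) < 1).
  { replace (A * B * (q * q ^ m) * (q * q ^ m)) with (A * q * (B * q) * (q ^ m * q ^ m)) by ring.
    apply Rmult_in_01; [apply Rmult_in_01|]; split; nra. }
  unfold qfactor_shift, contig_coef_same, contig_coef_succ. destruct k as [|j].
  - unfold jacobi_coef. rewrite (qpoch_mul_q (A * q) q m) by lra.
    rewrite !qpoch_S. cbn [qpoch pow]. field. prove_nonzero.
  - destruct (pow_pos_le_1 q j hq0 hq1).
    rewrite (jacobi_coef_succ_index q (A * q) B), jacobi_coef_succ_index_alpha,
      jacobi_coef_succ_degree_alpha by nra.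
    assert (0 < A * q * q < 1) by (apply Rmult_in_01; split; nra).
    cbn [pow]. field. prove_nonzero.
Qed.

Lemma jacobi_coef_contiguous_beta m k :
  qfactor_shift q (- B) (jacobi_coef q A (B * q) m) k
  = contig_coef_same B A (q ^ S m) * jacobi_coef q A B m k
    + contig_coef_succ B A (q ^ S m) * jacobi_coef q A B (S m) k.
Proof.
  destruct (pow_pos_le_1 q m hq0 hq1).
  assert (0 < B * A * (q * q ^ m) * (q * q ^ m) < 1).
  { replace (B * A * (q * q ^ m) * (q * q ^ m)) with (A * q * (B * q) * (q ^ m * q ^ m)) by ring.
    apply Rmult_in_01; [apply Rmult_in_01|]; split; nra. }
  unfold qfactor_shift, contig_coef_same, contig_coef_succ. destruct k as [|j].
  - unfold jacobi_coef. replace (- (B * q * q)) with (- (B * q) * q) by ring.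
    rewrite (qpoch_mul_q (- (B * q)) q m) by nra.
    rewrite !qpoch_S. cbn [qpoch pow]. field. prove_nonzero.
  - destruct (pow_pos_le_1 q j hq0 hq1).
    assert (0 < B * q * q < 1) by (apply Rmult_in_01; split; nra).
    rewrite (jacobi_coef_succ_index q A (B * q)), jacobi_coef_succ_index_beta,
      jacobi_coef_succ_degree_beta by nra.
    cbn [pow]. field. prove_nonzero.
Qed.

End JacobiContiguity.

Section QJacobiContiguity.

Variables (q al be : R) (x : C).
Hypotheses (hq0 : 0 < q) (hq1 : q < 1) (hal : -1 < al) (hbe : -1 < be).

Lemma qJacobiP_contiguous_alpha m :
  Cmult (qfactor q (qpow q al) x) (qJacobiP q (al + 1) be m x)
  = Cplus (Cmult (RtoC (contig_coef_same (qpow q al) (qpow q be) (q ^ S m))) (qJacobiP q al be m x))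
          (Cmult (RtoC (- contig_coef_succ (qpow q al) (qpow q be) (q ^ S m)))
                 (qJacobiP q al be (S m) x)).
Proof.
  pose proof (qpow_pos q al). pose proof (qpow_pos q be).
  pose proof (qpow_mul_q_lt_1 q al hq0 hq1 hal). pose proof (qpow_mul_q_lt_1 q be hq0 hq1 hbe).
  rewrite !qJacobiP_qcos_sum, (qpow_plus q al 1), qpow_1 by exact hq0.
  apply qfactor_mul_qcos_sum_contiguous; [exact hq0 | apply jacobi_coef_vanish; [lra | lia] ..|].
  intros k. rewrite jacobi_coef_contiguous_alpha by assumption. ring.
Qed.

Lemma qJacobiP_contiguous_beta m :
  Cmult (qfactor q (- qpow q be) x) (qJacobiP q al (be + 1) m x)
  = Cplus (Cmult (RtoC (contig_coef_same (qpow q be) (qpow q al) (q ^ S m))) (qJacobiP q al be m x))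
          (Cmult (RtoC (contig_coef_succ (qpow q be) (qpow q al) (q ^ S m)))
                 (qJacobiP q al be (S m) x)).
Proof.
  pose proof (qpow_pos q al). pose proof (qpow_pos q be).
  pose proof (qpow_mul_q_lt_1 q al hq0 hq1 hal). pose proof (qpow_mul_q_lt_1 q be hq0 hq1 hbe).
  rewrite !qJacobiP_qcos_sum, (qpow_plus q be 1), qpow_1 by exact hq0.
  apply qfactor_mul_qcos_sum_contiguous; [exact hq0 | apply jacobi_coef_vanish; [lra | lia] ..|].
  intros k. rewrite jacobi_coef_contiguous_beta by assumption. ring.
Qed.

End QJacobiContiguity.

Lemma qfactor_qpow q a x : 0 < q ->
  Cplus (Cminus (RtoC 1) (Cmult (RtoC (2 * qpow q (a + / 2))) x)) (RtoC (qpow q (2 * a + 1)))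
  = qfactor q (qpow q a) x.
Proof.
  intros hq. unfold qfactor. rewrite !qpow_plus, qpow_double, qpow_1 by exact hq.
  destruct x as [x1 x2]. apply injective_projections; simpl; ring.
Qed.

Lemma qfactor_opp_qpow q a x : 0 < q ->
  Cplus (Cplus (RtoC 1) (Cmult (RtoC (2 * qpow q (a + / 2))) x)) (RtoC (qpow q (2 * a + 1)))
  = qfactor q (- qpow q a) x.
Proof.
  intros hq. unfold qfactor. rewrite !qpow_plus, qpow_double, qpow_1 by exact hq.
  destruct x as [x1 x2]. apply injective_projections; simpl; ring.
Qed.

Definition rec_coef_prev (q al be : R) (n : nat) : R :=
  (1 + qpow q (al + be + INR n)) * (1 + qpow q (al + be + INR n + 1))
  * (1 + qpow q (al + INR n)) * (1 + qpow q (be + INR n))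
  * (1 - qpow q (al + INR n)) * (1 - qpow q (be + INR n))
  / ((1 - qpow q (2 * INR n + al + be)) * (1 - qpow q (2 * INR n + al + be + 1))).

Definition rec_coef_curr (q al be : R) (n : nat) : R :=
  (1 + qpow q (al + be + INR n + 1)) * (1 + qpow q (al + be + 2 * INR n + 1))
  * (1 + q ^ n) ^ 2 * (1 - q ^ n) * (1 - qpow q (al - be))
  / ((1 - qpow q (2 * INR n + al + be)) * (1 - qpow q (2 * INR n + al + be + 2)))
  * qpow q be.

Definition rec_coef_next (q al be : R) (n : nat) : R :=
  (1 + q ^ n) ^ 2 * (1 + q ^ (n + 1)) ^ 2 * (1 - q ^ n) * (1 - q ^ (n + 1))
  / ((1 - qpow q (2 * INR n + al + be + 1)) * (1 - qpow q (2 * INR n + al + be + 2)))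
  * qpow q (al + be).

Section RecurrenceCoefficients.

Variables (q al be : R) (m : nat).
Hypotheses (hq0 : 0 < q) (hq1 : q < 1) (hal : -1 < al) (hbe : -1 < be).

Ltac expand_qpow :=
  rewrite ?S_INR; unfold Rminus;
  repeat (rewrite qpow_plus || rewrite qpow_opp || rewrite qpow_double);
  rewrite ?qpow_INR, ?qpow_1, ?qpow_2 by exact hq0;
  cbn [pow].

Ltac bound_powers :=
  pose proof (qpow_pos q al); pose proof (qpow_pos q be);
  pose proof (qpow_mul_q_lt_1 q al hq0 hq1 hal); pose proof (qpow_mul_q_lt_1 q be hq0 hq1 hbe);
  destruct (pow_pos_le_1 q m hq0 hq1);
  set (A := qpow q al) in *; set (B := qpow q be) in *; set (M := q ^ m) in *;
  assert (0 < A * q * (B * q) * (M * M) < 1)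
    by (apply Rmult_in_01; [apply Rmult_in_01|]; split; nra);
  assert (0 < q * q < 1) by (split; nra).

Lemma rec_coef_prev_contig :
  rec_coef_prev q al be (S m)
  = contig_coef_same (qpow q be) (qpow q (al + 1)) (q ^ S m)
    * contig_coef_same (qpow q al) (qpow q be) (q ^ S m).
Proof.
  unfold rec_coef_prev, contig_coef_same. expand_qpow.
  bound_powers. field. prove_nonzero.
Qed.

Lemma rec_coef_curr_contig :
  rec_coef_curr q al be (S m)
  = contig_coef_succ (qpow q be) (qpow q (al + 1)) (q ^ S m)
    * contig_coef_same (qpow q al) (qpow q be) (q ^ S (S m))
    - contig_coef_same (qpow q be) (qpow q (al + 1)) (q ^ S m)
    * contig_coef_succ (qpow q al) (qpow q be) (q ^ S m).
Proof.
  unfold rec_coef_curr, contig_coef_same, contig_coef_succ. expand_qpow.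
  bound_powers. field. prove_nonzero.
Qed.

Lemma rec_coef_next_contig :
  rec_coef_next q al be (S m)
  = contig_coef_succ (qpow q be) (qpow q (al + 1)) (q ^ S m)
    * contig_coef_succ (qpow q al) (qpow q be) (q ^ S (S m)).
Proof.
  unfold rec_coef_next, contig_coef_succ. replace (S m + 1)%nat with (S (S m)) by lia.
  expand_qpow. bound_powers. field. prove_nonzero.
Qed.

End RecurrenceCoefficients.

Theorem theorem2p1 (q al be : R) (hq0 : 0 < q) (hq1 : q < 1)
  (hal : -1 < al) (hbe : -1 < be) (n : nat) (hn : (1 <= n)%nat) (x : C) :
  Cmult (Cmult
     (Cplus (Cminus (RtoC 1) (Cmult (RtoC (2 * qpow q (al + / 2))) x))
            (RtoC (qpow q (2 * al + 1))))
     (Cplus (Cplus (RtoC 1) (Cmult (RtoC (2 * qpow q (be + / 2))) x))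
            (RtoC (qpow q (2 * be + 1)))))
    (qJacobiP q (al + 1) (be + 1) (n - 1) x)
  =
  Cminus
   (Cplus
    (Cmult (RtoC ((1 + qpow q (al + be + INR n)) * (1 + qpow q (al + be + INR n + 1))
                  * (1 + qpow q (al + INR n)) * (1 + qpow q (be + INR n))
                  * (1 - qpow q (al + INR n)) * (1 - qpow q (be + INR n))
                  / ((1 - qpow q (2 * INR n + al + be))
                     * (1 - qpow q (2 * INR n + al + be + 1)))))
           (qJacobiP q al be (n - 1) x))
    (Cmult (RtoC ((1 + qpow q (al + be + INR n + 1)) * (1 + qpow q (al + be + 2 * INR n + 1))
                  * (1 + q ^ n) ^ 2 * (1 - q ^ n) * (1 - qpow q (al - be))
                  / ((1 - qpow q (2 * INR n + al + be))
                     * (1 - qpow q (2 * INR n + al + be + 2)))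
                  * qpow q be))
           (qJacobiP q al be n x)))
   (Cmult (RtoC ((1 + q ^ n) ^ 2 * (1 + q ^ (n + 1)) ^ 2 * (1 - q ^ n) * (1 - q ^ (n + 1))
                 / ((1 - qpow q (2 * INR n + al + be + 1))
                    * (1 - qpow q (2 * INR n + al + be + 2)))
                 * qpow q (al + be)))
          (qJacobiP q al be (n + 1) x)).
Proof.
  fold (rec_coef_prev q al be n) (rec_coef_curr q al be n) (rec_coef_next q al be n).
  rewrite qfactor_qpow, qfactor_opp_qpow, <- Cmult_assoc by exact hq0.
  destruct n as [|m]; [lia|].
  replace (S m - 1)%nat with m by lia. replace (S m + 1)%nat with (S (S m)) by lia.
  rewrite rec_coef_prev_contig, rec_coef_curr_contig, rec_coef_next_contig by assumption.
  rewrite qJacobiP_contiguous_beta by (assumption || lra).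
  assert (hscal : forall c P, Cmult (qfactor q (qpow q al) x) (Cmult (RtoC c) P)
                              = Cmult (RtoC c) (Cmult (qfactor q (qpow q al) x) P)) by (intros; ring).
  rewrite Cmult_plus_distr_l, !hscal, !qJacobiP_contiguous_alpha by assumption.
  rewrite ?RtoC_minus, ?RtoC_opp, ?RtoC_mult. ring.
Qed.
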